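(* Let $J$ be a finite set and $F:\{0,1\}^J\to\mathbb{Q}_{\ge0}$. Then $F$ is windable if and only if $F_\oplus$ is even-windable.
   Context: For $x,y\in\{0,1\}^I$, $x\oplus y$ is coordinatewise addition mod 2, and $\mathbf S$ is the characteristic vector of $S\subseteq I$. $1+J$ denotes the disjoint union of $\{1\}$ and $J$, with elements of $\{0,1\}^{1+J}$ written $(p;x)$, $p\in\{0,1\}$, $x\in\{0,1\}^J$. Define $F_\oplus:\{0,1\}^{1+J}\to\mathbb{Q}_{\ge0}$ by $F_\oplus(p;x)=F(x)$ if $p+\sum_{i\in J}x_i$ is even and $0$ otherwise. For $z\in\{0,1\}^I$, $\mathrm{Match}(z)$ is the set of partitions of $\{i:z_i=1\}$ into pairs, and $\mathrm{Match}'(z)$ the set of partitions of $\{i:z_i=1\}$ into blocks of size 1 or 2. $G:\{0,1\}^I\to\mathbb{Q}_{\ge0}$ is even-windable if there exist $B(x,y,M)\ge0$ for all $x,y\in\{0,1\}^I$, $M\in\mathrm{Match}(x\oplus y)$, with $G(x)G(y)=\sum_{M\in\mathrm{Match}(x\oplus y)}B(x,y,M)$ for all $x,y$, and $B(x,y,M)=B(x\oplus\mathbf S,y\oplus\mathbf S,M)$ for all $x,y$ and all $S\in M\in\mathrm{Match}(x\oplus y)$. $G$ is windable if the same holds with $\mathrm{Match}$ replaced everywhere by $\mathrm{Match}'$. *)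

From HB Require Import structures.
From mathcomp Require Import all_boot all_order all_algebra.
Set Implicit Arguments. Unset Strict Implicit. Unset Printing Implicit Defensive.
Import Order.TTheory GRing.Theory Num.Theory.
Local Open Scope ring_scope.

Definition bvec (I : finType) := {ffun I -> bool}.

Definition bxor (I : finType) (x y : bvec I) : bvec I := [ffun i => x i (+) y i].

Definition charv (I : finType) (S : {set I}) : bvec I := [ffun i => i \in S].

Definition supp (I : finType) (z : bvec I) : {set I} := [set i | z i].

Definition is_match (I : finType) (z : bvec I) (M : {set {set I}}) : bool :=
  partition M (supp z) && [forall S in M, #|S| == 2%N].

Definition is_match' (I : finType) (z : bvec I) (M : {set {set I}}) : bool :=
  partition M (supp z) && [forall S in M, (#|S| == 1%N) || (#|S| == 2%N)].

Definition windable_wrt (I : finType)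
    (mt : bvec I -> {set {set I}} -> bool) (G : bvec I -> rat) : Prop :=
  exists B : bvec I -> bvec I -> {set {set I}} -> rat,
    (forall x y M, mt (bxor x y) M -> 0 <= B x y M) /\
    (forall x y, G x * G y = \sum_(M : {set {set I}} | mt (bxor x y) M) B x y M) /\
    (forall x y M S, mt (bxor x y) M -> S \in M ->
        B x y M = B (bxor x (charv S)) (bxor y (charv S)) M).

Definition even_windable (I : finType) (G : bvec I -> rat) : Prop :=
  windable_wrt (@is_match I) G.

Definition windable (I : finType) (G : bvec I -> rat) : Prop :=
  windable_wrt (@is_match' I) G.

(* 1+J is modelled as option J, with None the extra element;
   z = (p;x) with p = z None and x_j = z (Some j). *)
Definition F_oplus (J : finType) (F : bvec J -> rat) (z : bvec (option J)) : rat :=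
  let p := z None in
  let x : bvec J := [ffun j => z (Some j)] in
  if ~~ odd (p + \sum_(j : J) x j)%N then F x else 0.

From HB Require Import structures.
From mathcomp Require Import all_boot all_order all_algebra.
Import Order.TTheory GRing.Theory Num.Theory.
Set Implicit Arguments. Unset Strict Implicit. Unset Printing Implicit Defensive.

(* The extra coordinate [None] of [option J] records the parity bit p.  Every
   x : {0,1}^J has a unique even-weight extension [lift x], and F_oplus vanishes
   off even-weight vectors, where it equals F of the projection [proj].
   - Even-windable => windable: a perfect matching M' of lift x (+) lift y
     projects (forget [None]) to a matching of x (+) y into blocks of size 1 or
     2; the weight of a projected matching is the sum of the weights of the
     perfect matchings projecting onto it.  Flipping a projected block S of
     x, y is the projection of flipping the pair S' above it, since [lift] is
     additive and a pair has even weight.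
   - Windable => even-windable: a matching M of proj (z (+) w) into blocks of
     size 1 or 2 is [completion]ed to a perfect matching of z (+) w by lifting
     its pairs and pairing up, in a fixed order, its singletons together with
     [None] when needed; parity makes this list even.  The weight of a perfect
     matching M' is the sum of the weights of the M completing to M'.  Each
     block of the completion is a lifted pair of M or a union of two singletons
     of M, so flipping it is one or two flips of blocks of M. *)

Section BoolVectors.
Variable I : finType.
Implicit Types (x y v : bvec I) (S : {set I}).

Definition weight x : nat := \sum_i (x i : nat).

Lemma weight_supp x : weight x = #|supp x|.
Proof.
rewrite /weight -sum1_card (big_mkcond (fun i => i \in supp x)) /=.
by apply: eq_bigr => i _; rewrite inE; case: (x i).
Qed.

Lemma weight_charv S : weight (charv S) = #|S|.
Proof. by rewrite weight_supp; apply: eq_card => i; rewrite !inE ffunE. Qed.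

Lemma odd_weight_bxor x y : odd (weight (bxor x y)) = odd (weight x) (+) odd (weight y).
Proof.
have E : (weight (bxor x y) + (\sum_i (x i && y i : nat)).*2 = weight x + weight y)%N.
  rewrite /weight -muln2 big_distrl /= -!big_split /=; apply: eq_bigr => i _.
  by rewrite ffunE; case: (x i); case: (y i).
by rewrite -oddD -E oddD odd_double addbF.
Qed.

Lemma bxorA x y v : bxor (bxor x y) v = bxor x (bxor y v).
Proof. by apply/ffunP => i; rewrite !ffunE addbA. Qed.

Lemma bxor_cancel x y v : bxor (bxor x v) (bxor y v) = bxor x y.
Proof. by apply/ffunP => i; rewrite !ffunE; case: (x i); case: (y i); case: (v i). Qed.

Lemma charv_set2 (a b : I) : a != b ->
  charv [set a; b] = bxor (charv [set a]) (charv [set b]).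
Proof.
move=> nab; apply/ffunP => i; rewrite !ffunE !inE.
by case: (eqVneq i a) => [->|_]; rewrite ?(negbTE nab).
Qed.

End BoolVectors.

Section Partitions.
Variable T : finType.
Implicit Types (P Q : {set {set T}}) (A B D : {set T}).

Lemma partition_memP P D :
  partition P D <->
  [/\ set0 \notin P,
      (forall a, a \in D <-> exists2 S, S \in P & a \in S) &
      (forall S S' a, S \in P -> S' \in P -> a \in S -> a \in S' -> S = S')].
Proof.
rewrite /partition /cover; split.
  case/and3P => /eqP cov /trivIsetP tI P0; split => //.
    move=> a; rewrite -cov; split; first by case/bigcupP => S; exists S.
    by case=> S SP aS; apply/bigcupP; exists S.
  move=> S S' a SP S'P aS aS'; apply/eqP; apply/negPn/negP => nSS'.
  by have := disjointFr (tI _ _ SP S'P nSS') aS; rewrite aS'.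
case=> P0 cov tI; apply/and3P; split => //.
  apply/eqP/setP => a; apply/bigcupP/idP.
    by case=> S SP aS; apply/(cov a); exists S.
  by move/(cov a) => [S SP aS]; exists S.
apply/trivIsetP => S S' SP S'P nSS'; apply/pred0P => a /=.
by apply/negP => /andP [aS aS']; rewrite (tI _ _ _ SP S'P aS aS') eqxx in nSS'.
Qed.

Lemma partitionU P Q A B : partition P A -> partition Q B -> [disjoint A & B] ->
  partition (P :|: Q) (A :|: B).
Proof.
case/and3P => /eqP covP trivP P0 /and3P [/eqP covQ trivQ Q0] dAB.
rewrite /partition {1}/cover bigcup_setU -/(cover P) -/(cover Q) covP covQ eqxx.
by rewrite trivIsetU ?covP ?covQ // inE negb_or P0 Q0.
Qed.

Lemma partition_sub P D Q : partition P D -> Q \subset P -> partition Q (cover Q).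
Proof.
case/and3P => _ trivP P0 sQP; rewrite /partition eqxx (trivIsetS sQP) //=.
by apply: contraNN P0; apply: (subsetP sQP).
Qed.

Definition doubles P := [set S in P | #|S| == 2].
Definition singles P : {set T} := [set a | [set a] \in P].

Lemma partition_doubles P D : partition P D -> partition (doubles P) (cover (doubles P)).
Proof. by move/partition_sub; apply; apply/subsetP => S; rewrite inE => /andP []. Qed.

Fixpoint pairs (s : seq T) : seq {set T} :=
  if s is a :: b :: r then [set a; b] :: pairs r else [::].

Lemma pairs_blocks s S : uniq s -> S \in pairs s ->
  exists a b, [/\ a != b, a \in s, b \in s & S = [set a; b]].
Proof.
have [n] := ubnP (size s); elim: n s => // n IH [|a [|b r]] //= /ltnSE/ltnW ltrn.
case/andP => /norP [nab _] /andP [_ ur].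
rewrite inE => /orP [/eqP -> | Sr]; first by exists a, b; rewrite !inE !eqxx orbT.
have [a' [b' [nab' a'r b'r ->]]] := IH r ltrn ur Sr.
by exists a', b'; rewrite !inE a'r b'r !orbT.
Qed.

Lemma pairs_partition s : uniq s -> ~~ odd (size s) ->
  partition [set S | S \in pairs s] [set a in s].
Proof.
have [n] := ubnP (size s); elim: n s => // n IH [|a [|b r]] //= ltrn.
  by move=> _ _; rewrite partition_set0; apply/eqP/setP => S; rewrite !inE.
have {}ltrn : size r < n by rewrite ltnS in ltrn; apply: ltnW.
case/andP => /norP [nab nar] /andP [nbr ur]; rewrite negbK => evr.
have -> : [set S | S \in [set a; b] :: pairs r] = [set a; b] |: [set S | S \in pairs r].
  by apply/setP => S; rewrite !inE.
have -> : [set c in [:: a, b & r]] = [set a; b] :|: [set c in r].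
  by apply/setP => c; rewrite !inE orbA.
apply: partitionU1; first exact: IH.
  by apply/set0Pn; exists a; rewrite !inE eqxx.
apply/pred0P => c /=; apply/negP => /andP [].
by rewrite !inE => /orP [] /eqP ->; apply/negP.
Qed.

Lemma partition12_split P D : partition P D ->
  {in P, forall S : {set T}, (#|S| == 1) || (#|S| == 2)} ->
  D = cover (doubles P) :|: singles P /\ [disjoint cover (doubles P) & singles P].
Proof.
case/partition_memP => _ cov tI c12; split.
  apply/setP => a; apply/idP/idP => [/(cov a) [S SP aS] | ].
    case/orP: (c12 _ SP) => cS; last first.
      by rewrite inE; apply/orP; left; apply/bigcupP; exists S; rewrite ?inE ?SP.
    case/cards1P: cS aS SP => c -> /set1P ->; rewrite !inE => ->; apply: orbT.
  case/setUP => [/bigcupP [S] | ].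
    by rewrite inE => /andP [SP _] aS; apply/(cov a); exists S.
  by rewrite inE => aP; apply/(cov a); exists [set a]; rewrite ?inE.
apply/pred0P => a /=; apply/negP => /andP [/bigcupP [S]].
rewrite !inE => /andP [SP cS] aS aP.
by move: cS; rewrite (tI _ _ _ SP aP aS (set11 a)) cards1.
Qed.

End Partitions.

Section ExtraCoordinate.
Variable J : finType.
Local Notation OJ := (option J).
Implicit Types (x y : bvec J) (z w v : bvec OJ) (S : {set OJ}).

(* Forget the extra coordinate, on vectors and on sets; [lift x] is the unique
   extension of x of even weight. *)
Definition proj z : bvec J := [ffun j => z (Some j)].
Definition proj_set S : {set J} := Some @^-1: S.
Definition lift x : bvec OJ :=
  [ffun o => if o is Some j then x j else odd (weight x)].

Lemma weight_option z : weight z = (z None + weight (proj z))%N.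
Proof.
rewrite /weight (bigD1 None) //=; congr (_ + _)%N.
rewrite (reindex_omap Some id) //=; last by case.
by apply: eq_big => [j | j _]; rewrite ?eqxx ?ffunE.
Qed.

Lemma F_oplusE (F : bvec J -> rat) z :
  F_oplus F z = if ~~ odd (weight z) then F (proj z) else 0%R.
Proof. by rewrite weight_option. Qed.

Lemma proj_bxor z w : proj (bxor z w) = bxor (proj z) (proj w).
Proof. by apply/ffunP => j; rewrite !ffunE. Qed.

Lemma proj_charv S : proj (charv S) = charv (proj_set S).
Proof. by apply/ffunP => j; rewrite !ffunE inE. Qed.

Lemma card_option S : #|S| = ((None \in S) + #|proj_set S|)%N.
Proof. by rewrite -!weight_charv weight_option proj_charv ffunE. Qed.

Lemma proj_lift x : proj (lift x) = x.
Proof. by apply/ffunP => j; rewrite !ffunE. Qed.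

Lemma weight_lift x : ~~ odd (weight (lift x)).
Proof. by rewrite weight_option proj_lift ffunE oddD oddb addbb. Qed.

Lemma lift_proj v : ~~ odd (weight v) -> lift (proj v) = v.
Proof.
rewrite weight_option oddD oddb => ev; apply/ffunP => -[j|]; rewrite !ffunE //.
by move: ev; case: (v None); case: (odd _).
Qed.

(* [lift] is additive, since the parity of the weight is. *)
Lemma lift_bxor x y : lift (bxor x y) = bxor (lift x) (lift y).
Proof.
apply/ffunP => -[j|]; rewrite !ffunE //.
by rewrite odd_weight_bxor.
Qed.

Lemma F_oplus_lift (F : bvec J -> rat) x : F_oplus F (lift x) = F x.
Proof. by rewrite F_oplusE (negbTE (weight_lift x)) proj_lift. Qed.

End ExtraCoordinate.

Section EvenToArbitrary.
Variable J : finType.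
Local Notation OJ := (option J).

Definition proj_match (M : {set {set OJ}}) : {set {set J}} := [set proj_set S | S in M].

(* A perfect matching projects to a matching into blocks of size 1 or 2: a pair
   loses at most the point [None]. *)
Lemma proj_is_match (zw : bvec OJ) M :
  is_match zw M -> is_match' (proj zw) (proj_match M).
Proof.
case/andP => /partition_memP [P0 cov tI] /forall_inP c2.
have cardP S : S \in M -> #|proj_set S| = (2 - (None \in S))%N.
  by move=> SM; have := eqP (c2 _ SM); rewrite card_option => <-; rewrite addKn.
apply/andP; split; last first.
  by apply/forall_inP => _ /imsetP [S SM ->]; rewrite cardP //; case: (None \in S).
apply/partition_memP; split.
- apply/negP => /imsetP [S SM E]; have := cardP _ SM.
  by rewrite -E cards0; case: (None \in S).
- move=> j; rewrite inE ffunE; have := cov (Some j); rewrite inE => {}cov.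
  split=> [/cov [S SM jS] | [_ /imsetP [S SM ->]]].
    by exists (proj_set S); [apply: imset_f | rewrite inE].
  by rewrite inE => jS; apply/cov; exists S.
- move=> _ _ j /imsetP [S SM ->] /imsetP [S' S'M ->]; rewrite !inE => jS jS'.
  by rewrite (tI _ _ _ SM S'M jS jS').
Qed.

Lemma lift_flip (x : bvec J) (S : {set OJ}) : #|S| = 2 ->
  lift (bxor x (charv (proj_set S))) = bxor (lift x) (charv S).
Proof. by move=> cS; rewrite lift_bxor -proj_charv lift_proj // weight_charv cS. Qed.

Local Open Scope ring_scope.

Lemma even_windable_windable (F : bvec J -> rat) :
  even_windable (F_oplus F) -> windable F.
Proof.
case=> B [B_ge0 [B_sum B_inv]].
exists (fun x y M =>
  \sum_(M' | is_match (bxor (lift x) (lift y)) M' && (proj_match M' == M))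
     B (lift x) (lift y) M').
split; [|split].
- by move=> x y M _; apply: sumr_ge0 => M' /andP [HM' _]; apply: B_ge0.
- move=> x y; rewrite -(F_oplus_lift F x) -(F_oplus_lift F y) B_sum.
  rewrite (partition_big (@proj_match) (is_match' (bxor x y))) //.
  by move=> M' /proj_is_match; rewrite proj_bxor !proj_lift.
- move=> x y M S _ SM; rewrite !lift_bxor bxor_cancel.
  apply: eq_bigr => M' /andP [HM' /eqP EM].
  have : S \in proj_match M' by rewrite EM.
  case/imsetP => S' S'M ->.
  have cS' : #|S'| = 2%N by case/andP: HM' => _ /forall_inP c2; apply/eqP/c2.
  by rewrite -!lift_bxor !lift_flip //; apply: B_inv.
Qed.

End EvenToArbitrary.

Section ArbitraryToEven.
Variable J : finType.
Local Notation OJ := (option J).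
Implicit Types (zw : bvec OJ) (M : {set {set J}}).

(* For a matching M of proj zw into blocks of size 1 or 2, the points of
   supp zw not covered by a lifted pair of M: the singletons of M, and [None]
   if it lies in supp zw. *)
Definition unmatched zw M : seq OJ :=
  (if zw None then [:: None] else [::]) ++ map Some (enum (singles M)).

Definition completion zw M : {set {set OJ}} :=
  [set Some @: (T : {set J}) | T in doubles M] :|: [set S | S \in pairs (unmatched zw M)].

Lemma uniq_unmatched zw M : uniq (unmatched zw M).
Proof.
rewrite /unmatched; case: (zw None) => /=; rewrite (map_inj_uniq Some_inj) enum_uniq //.
by rewrite andbT; apply/mapP => -[].
Qed.

Lemma mem_unmatched zw M o :
  (o \in unmatched zw M) = if o is Some c then c \in singles M else zw None.
Proof.
rewrite /unmatched mem_cat; case: o => [c|].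
  by rewrite (mem_map Some_inj) mem_enum; case: (zw None).
by case: (zw None); rewrite /= ?inE ?eqxx //; apply/mapP => -[].
Qed.

Lemma None_notin_Some (A : {set J}) : None \in Some @: A = false.
Proof. by apply/imsetP => -[]. Qed.

Lemma supp_split zw M : is_match' (proj zw) M ->
  supp zw = Some @: cover (doubles M) :|: [set o in unmatched zw M] /\
  [disjoint Some @: cover (doubles M) & [set o in unmatched zw M]].
Proof.
case/andP => PM /forall_inP c12; have [Esupp dis] := partition12_split PM c12.
split.
  apply/setP => -[j|]; rewrite !inE mem_unmatched ?None_notin_Some //.
  have -> : zw (Some j) = (j \in supp (proj zw)) by rewrite inE ffunE.
  by rewrite Esupp (mem_imset _ _ Some_inj) inE.
apply/pred0P => -[j|] /=; rewrite ?None_notin_Some // inE mem_unmatched.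
rewrite (mem_imset _ _ Some_inj); apply/negbTE/andP => -[jC jS].
by rewrite (disjointFr dis jC) in jS.
Qed.

Lemma unmatched_even zw M : ~~ odd (weight zw) -> is_match' (proj zw) M ->
  ~~ odd (size (unmatched zw M)).
Proof.
move=> ev HM; have [Esupp dis] := supp_split HM.
have cD : {in doubles M, forall T : {set J}, #|T| = 2%N}.
  by move=> T; rewrite inE => /andP [_ /eqP].
move: ev; rewrite weight_supp Esupp cardsU (disjoint_setI0 dis) cards0 subn0.
rewrite (card_imset _ Some_inj) cardsE (card_uniqP (uniq_unmatched _ _)).
rewrite (card_uniform_partition cD (partition_doubles (andP HM).1)).
by rewrite oddD oddM andbF.
Qed.

Lemma completion_is_match zw M : ~~ odd (weight zw) -> is_match' (proj zw) M ->
  is_match zw (completion zw M).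
Proof.
move=> ev HM; have [Esupp dis] := supp_split HM; have us := uniq_unmatched zw M.
apply/andP; split.
  rewrite Esupp; apply: partitionU dis.
    by rewrite imset_partition; [apply: partition_doubles (andP HM).1 | apply: Some_inj].
  exact: pairs_partition us (unmatched_even ev HM).
apply/forall_inP => S /setUP [/imsetP [T] | ].
  by rewrite inE => /andP [_ cT] ->; rewrite (card_imset _ Some_inj).
rewrite inE => /(pairs_blocks us) [a [b [nab _ _ ->]]].
by rewrite cards2 nab.
Qed.

(* Each block of the completion projects to a block of M or to the union of
   two singleton blocks of M; this transports the flip invariance. *)
Lemma completion_blocks zw M S : S \in completion zw M ->
  proj_set S \in M \/
  exists c d, [/\ c != d, [set c] \in M, [set d] \in M & proj_set S = [set c; d]].
Proof.
case/setUP => [/imsetP [T] | ].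
  rewrite inE => /andP [TM _] ->; left.
  suff -> : proj_set (Some @: T) = T by [].
  by apply/setP => j; rewrite inE (mem_imset _ _ Some_inj).
rewrite inE => /(pairs_blocks (uniq_unmatched zw M)) [a [b [nab]]].
rewrite !mem_unmatched => Ha Hb ->.
case: a b nab Ha Hb => [c|] [d|] // ncd; rewrite ?inE => cM dM.
- right; exists c, d; split=> //.
  by apply/setP => j; rewrite !inE.
- left; suff -> : proj_set [set Some c; None] = [set c] by [].
  by apply/setP => j; rewrite !inE orbF.
- left; suff -> : proj_set [set None; Some d] = [set d] by [].
  by apply/setP => j; rewrite !inE.
Qed.

Local Open Scope ring_scope.

Lemma windable_even_windable (F : bvec J -> rat) :
  windable F -> even_windable (F_oplus F).
Proof.
case=> B [B_ge0 [B_sum B_inv]].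
pose B' (z w : bvec OJ) (M' : {set {set OJ}}) :=
  if ~~ odd (weight z) && ~~ odd (weight w) then
  \sum_(M | is_match' (bxor (proj z) (proj w)) M && (completion (bxor z w) M == M'))
     B (proj z) (proj w) M
  else 0.
exists B'; split; [|split].
- move=> z w M' _; rewrite /B'; case: ifP => // _.
  by apply: sumr_ge0 => M /andP [HM _]; apply: B_ge0.
- move=> z w; rewrite !F_oplusE /B'.
  case ez: (odd (weight z)); case ew: (odd (weight w));
    rewrite /= ?mul0r ?mulr0 ?big1_eq //.
  rewrite B_sum (partition_big (completion (bxor z w)) (is_match (bxor z w))) //.
  move=> M HM; apply: completion_is_match; last by rewrite proj_bxor.
  by rewrite odd_weight_bxor ez ew.
- move=> z w M' S HM' SM'.
  have cS : #|S| = 2%N by case/andP: HM' => _ /forall_inP c2; apply/eqP/c2.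
  have evS : odd (weight (charv S)) = false by rewrite weight_charv cS.
  rewrite /B' !odd_weight_bxor evS !addbF bxor_cancel; case: ifP => // _.
  rewrite !proj_bxor proj_charv bxor_cancel; apply: eq_bigr => M /andP [HM /eqP EM].
  have : S \in completion (bxor z w) M by rewrite EM.
  case/completion_blocks => [SM | [c [d [ncd cM dM ->]]]]; first exact: B_inv.
  rewrite charv_set2 // -!bxorA (B_inv _ _ _ _ HM cM) (B_inv _ _ _ _ _ dM) //.
  by rewrite bxor_cancel.
Qed.

End ArbitraryToEven.

Local Open Scope ring_scope.

Theorem lemma8 (J : finType) (F : bvec J -> rat) (F_nonneg : forall x, 0 <= F x) :
  windable F <-> even_windable (F_oplus F).
Proof. split; [exact: windable_even_windable | exact: even_windable_windable]. Qed.
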